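(* Let $a_m=\binom{2m-1}{m}$ for $m\ge1$ (so $a_1,a_2,\dots=1,3,10,35,126,\dots$), and let the integers $T_{nj},U_{nj}$ be as defined below. Then for all $n\ge1$: $$\sum_{j=0}^n a_{n+j}T_{nj}=1,\qquad \sum_{j=0}^{n+1}a_{n+j}U_{nj}=3.$$
   Context: The numbers $T_{nj},U_{nj}$ (integers $n\ge0$, $j$) are defined by: $T_{nj}=U_{nj}=0$ whenever $j<0$; $T_{0j}=0$ for all $j\ge1$, $U_{01}=-1$, $U_{0j}=0$ for all $j\ge2$; $T_{10}=4$, $U_{10}=4$; and for all $n\ge1$, $j\ge0$ with $(n,j)\ne(1,0)$: $T_{nj}=-3T_{n-1,j}+U_{n-1,j}$ and $U_{nj}=-4T_{n-1,j}+U_{n-1,j}+T_{n,j-1}$. *)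

From mathcomp Require Import all_boot all_order all_algebra.
Import Order.TTheory GRing.Theory Num.Theory.
Local Open Scope ring_scope.

(* Row 0 of the table, indexed by j : nat (entries with j < 0 are 0 and
   are handled separately below). *)
Definition T0 (j : nat) : int := 0.
Definition U0 (j : nat) : int := if j == 1%N then -1 else 0.

Fixpoint TU (n : nat) : nat -> int * int :=
  match n with
  | 0%N => fun j => (T0 j, U0 j)
  | n'.+1 =>
    let prev := TU n' in
    let Tn := fun k : nat =>
      if (n' == 0%N) && (k == 0%N) then 4
      else -3 * (prev k).1 + (prev k).2 in
    fun j =>
      if (n' == 0%N) && (j == 0%N) then (4, 4)
      else
        (Tn j,
         -4 * (prev j).1 + (prev j).2 + (if j is j'.+1 then Tn j' else 0))
  end.

Definition T (n j : nat) : int := (TU n j).1.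
Definition U (n j : nat) : int := (TU n j).2.

Definition a (m : nat) : nat := 'C(2 * m - 1, m).

From mathcomp Require Import all_boot all_order all_algebra.
From mathcomp Require Import zify ring.
Import Order.TTheory GRing.Theory Num.Theory.
Local Open Scope ring_scope.

(* The rows of T satisfy T_{n+2}(x) = (x - 2) T_{n+1}(x) - T_n(x) as polynomials
   in x, and U_n = T_{n+1} + 3 T_n.  Pairing row n with the sequence a_{k+j}
   therefore gives a quantity M(n, k) with
   M(n+2, k) = M(n+1, k+1) - 2 M(n+1, k) - M(n, k), M(0, k) = 0 and
   M(1, k) = 4 a_k - a_{k+1}.  The ballot number C(2k-1, k-n) - C(2k-1, k-n-1)
   satisfies the same recurrence (Pascal's rule applied twice) and initial
   values (symmetry of C(2k-1, .)), so the two agree.  At k = n it equals 1,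
   and for row n + 1 at k = n it equals 0, which gives 1 and 0 + 3 * 1. *)

Lemma T_row1 j : T 1 j = if j == 0%N then 4 else if j == 1%N then -1 else 0.
Proof. by case: j => [|[|j]]. Qed.

Lemma U_T n j : (0 < n)%N -> U n j = T n.+1 j + 3 * T n j.
Proof. by case: n => // n _; rewrite /T /U /=; ring. Qed.

Lemma T_rec n j :
  T n.+2 j = (if j is j'.+1 then T n.+1 j' else 0) - 2 * T n.+1 j - T n j.
Proof.
case: n => [|n]; first by case: j => [|[|j]]; rewrite /T /U /T0 /=; ring.
rewrite /T /U /=; rewrite -/(T n.+1 j) -/(U n.+1 j) U_T //; ring.
Qed.

Lemma T_eq0 n j : (n < j)%N -> T n j = 0.
Proof.
elim/ltn_ind: n j => -[_ j _|[_ j hj|n IH j hj]]; first by [].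
  by rewrite T_row1; case: j hj => [|[|j]].
rewrite T_rec (IH n.+1) ?(IH n) //; try lia.
by case: j hj => // j hj; rewrite IH //; lia.
Qed.

Definition Tmoment (n k : nat) : int :=
  \sum_(0 <= j < n.+1) (a (k + j))%:Z * T n j.

Lemma Tmoment_widen n k N : (n < N)%N ->
  \sum_(0 <= j < N) (a (k + j))%:Z * T n j = Tmoment n k.
Proof.
move=> hN; rewrite /Tmoment (@big_cat_nat _ _ _ n.+1) //= -[RHS]addr0.
congr (_ + _); rewrite big_nat_cond big1 // => j /andP[/andP[hj _] _].
by rewrite T_eq0 ?mulr0.
Qed.

Lemma Tmoment_rec n k :
  Tmoment n.+2 k = Tmoment n.+1 k.+1 - 2 * Tmoment n.+1 k - Tmoment n k.
Proof.
have shift : \sum_(0 <= j < n.+3)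
    (a (k + j))%:Z * (if j is j'.+1 then T n.+1 j' else 0) = Tmoment n.+1 k.+1.
  by rewrite big_nat_recl // mulr0 add0r; apply: eq_bigr => j _; rewrite addSnnS.
rewrite -shift -(@Tmoment_widen n.+1 k n.+3) //.
rewrite -(@Tmoment_widen n k n.+3); last by lia.
rewrite /Tmoment mulr_sumr -!sumrB.
by apply: eq_bigr => j _; rewrite T_rec; ring.
Qed.

Lemma Tmoment0 k : Tmoment 0 k = 0.
Proof. by rewrite /Tmoment big_nat1 mulr0. Qed.

Lemma Tmoment1 k : Tmoment 1 k = 4 * (a k)%:Z - (a k.+1)%:Z.
Proof. by rewrite /Tmoment !big_nat_recl // big_geq // addn0 addn1 !T_row1 /=; ring. Qed.

Definition binz (N : nat) (m : int) : int :=
  if m < 0 then 0 else ('C(N, `|m|%N))%:Z.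

Lemma binz_neg N m : m < 0 -> binz N m = 0.
Proof. by rewrite /binz => ->. Qed.

Lemma binzS N m : binz N.+1 m = binz N m + binz N (m - 1).
Proof.
rewrite /binz; case: (ltrP m 0) => hm; first by rewrite ifT ?addr0; lia.
case: (ltrP (m - 1) 0) => hm1.
  have -> : m = 0 by lia.
  by rewrite !bin0 addr0.
have -> : `|m|%N = (`|m - 1|%N).+1 by lia.
by rewrite binS PoszD addrC.
Qed.

Lemma binzSS N m :
  binz N.+2 m = binz N m + 2 * binz N (m - 1) + binz N (m - 2).
Proof. by rewrite !binzS (_ : m - 1 - 1 = m - 2); [ring | lia]. Qed.

Lemma binz_sym N m : binz N m = binz N (N%:Z - m).
Proof.
rewrite /binz; case: (ltrP m 0) => hm.
  by rewrite ifF ?bin_small //; lia.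
case: (ltrP (N%:Z - m) 0) => hm1; first by rewrite bin_small //; lia.
by rewrite (_ : `|N%:Z - m|%N = (N - `|m|)%N) ?bin_sub //; lia.
Qed.

Lemma a_binz m : (a m)%:Z = binz (2 * m).-1 m.
Proof. by rewrite /a /binz subn1. Qed.

Definition ballot (N : nat) (p : int) : int := binz N p - binz N (p - 1).

Lemma ballot0 N : ballot N 0 = 1.
Proof. by rewrite /ballot (@binz_neg N (0 - 1)) // /binz /= bin0 subr0. Qed.

Lemma ballotN1 N : ballot N (-1) = 0.
Proof. by rewrite /ballot !binz_neg. Qed.

Lemma ballotSS N p :
  ballot N.+2 p = ballot N p + 2 * ballot N (p - 1) + ballot N (p - 2).
Proof.
rewrite /ballot !binzSS.
have -> : p - 1 - 1 = p - 2 by lia.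
have -> : p - 1 - 2 = p - 2 - 1 by lia.
ring.
Qed.

Lemma ballot_mid k : (0 < k)%N -> ballot (2 * k).-1 k = 0.
Proof.
move=> hk; rewrite /ballot [binz _ k%:Z]binz_sym.
have -> : ((2 * k).-1)%:Z - k%:Z = k%:Z - 1 by lia.
exact: subrr.
Qed.

Lemma ballot_row1 k : (0 < k)%N ->
  4 * (a k)%:Z - (a k.+1)%:Z = ballot (2 * k).-1 (k%:Z - 1).
Proof.
move=> hk; rewrite !a_binz.
have -> : (2 * k.+1).-1 = ((2 * k).-1).+2 by lia.
rewrite binzSS; set N := (2 * k).-1.
have symk : binz N k%:Z = binz N (k%:Z - 1).
  by rewrite binz_sym; congr binz; rewrite /N; lia.
have symkS : binz N k.+1%:Z = binz N (k%:Z - 2).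
  by rewrite binz_sym; congr binz; rewrite /N; lia.
have -> : k.+1%:Z - 1 = k%:Z by lia.
have -> : k.+1%:Z - 2 = k%:Z - 1 by lia.
rewrite /ballot symk symkS (_ : k%:Z - 1 - 1 = k%:Z - 2); [ring | lia].
Qed.

Lemma Tmoment_ballot n k : (0 < k)%N ->
  Tmoment n k = ballot (2 * k).-1 (k%:Z - n%:Z).
Proof.
elim/ltn_ind: n k => -[_ k hk|[_ k hk|n IH k hk]].
- by rewrite Tmoment0 subr0 ballot_mid.
- by rewrite Tmoment1 ballot_row1.
rewrite Tmoment_rec !IH // (_ : (2 * k.+1).-1 = ((2 * k).-1).+2); last by lia.
rewrite ballotSS (_ : k.+1%:Z - n.+1%:Z = k%:Z - n%:Z); last by lia.
rewrite (_ : k%:Z - n.+1%:Z = k%:Z - n%:Z - 1); last by lia.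
rewrite (_ : k%:Z - n.+2%:Z = k%:Z - n%:Z - 2); last by lia.
ring.
Qed.

Theorem proposition7p1 (n : nat) (hn : (1 <= n)%N) :
  \sum_(0 <= j < n.+1) (a (n + j))%:Z * T n j = 1 /\
  \sum_(0 <= j < n.+2) (a (n + j))%:Z * U n j = 3.
Proof.
have diag : Tmoment n n = 1 by rewrite Tmoment_ballot // subrr ballot0.
split; first exact: diag.
have -> : \sum_(0 <= j < n.+2) (a (n + j))%:Z * U n j
          = Tmoment n.+1 n + 3 * Tmoment n n.
  rewrite -[Tmoment n n](@Tmoment_widen _ _ n.+2) // /Tmoment mulr_sumr -big_split /=.
  by apply: eq_bigr => j _; rewrite U_T //; ring.
rewrite diag Tmoment_ballot // (_ : n%:Z - n.+1%:Z = -1) ?ballotN1; [ring | lia].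
Qed.
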